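(* Let $\{\ket{j}\}_{j=0}^{7}$ be the computational basis of three qubits, where $\ket{j}=\ket{j_1j_2j_3}$ with $j=4j_1+2j_2+j_3$, and let $$\ket{\psi_2}=\frac{1}{4\sqrt{2}}\left(\ket{0}+\ket{1}+\ket{2}+\ket{3}+\ket{4}+\ket{5}+\ket{6}+5\ket{7}\right),\qquad \rho_2=\ket{\psi_2}\bra{\psi_2}.$$ Denote by $A_2,B_2,C_2$ the first, second and third qubits of $\rho_2$. Then $$D(B_2C_2|A_2)=D(A_2C_2|B_2)=D(A_2B_2|C_2)=D(C_2|A_2B_2)=D(B_2|A_2C_2)=D(A_2|B_2C_2)$$ $$=-\tfrac{1}{8}(4+\sqrt{13})\log\left(\tfrac{1}{8}(4+\sqrt{13})\right)-\tfrac{1}{8}(4-\sqrt{13})\log\left(\tfrac{1}{8}(4-\sqrt{13})\right)\approx 0.28.$$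
   Context: Logarithms are base 2, and $S(\sigma)=-\mathrm{Tr}(\sigma\log\sigma)$ is the von Neumann entropy. For a state $\rho_{XY}$ on a bipartite system $X\otimes Y$ (here $X$ and $Y$ are complementary groups of the three qubits), the quantum discord with measurement on $X$ is $$D(Y|X)=\min_{\{E_a\}}\sum_a p_a S(\rho_{Y|a})+S(\rho_X)-S(\rho_{XY}),$$ where the minimum is over all POVMs $\{E_a\}$ on $X$ ($E_a\ge 0$, $\sum_a E_a=I$), $p_a=\mathrm{Tr}((E_a\otimes I)\rho_{XY})$, $\rho_{Y|a}=\mathrm{Tr}_X((E_a\otimes I)\rho_{XY})/p_a$, and $\rho_X,\rho_Y$ are reduced states. For example $D(B_2C_2|A_2)$ is the discord of $\rho_2$ viewed as a state on $A_2\otimes(B_2C_2)$ with measurement on $A_2$. *)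

From HB Require Import structures.
From mathcomp Require Import all_boot all_order all_algebra.
From mathcomp Require Import boolp classical_sets reals exp.
From mathcomp Require Import complex mxtens.
Set Implicit Arguments. Unset Strict Implicit. Unset Printing Implicit Defensive.
Import Order.TTheory GRing.Theory Num.Theory.
Local Open Scope ring_scope.
Local Open Scope classical_set_scope.

Section Quantum.
Variable R : realType.
Local Notation C := R[i].

Definition adj m n (A : 'M[C]_(m, n)) : 'M[C]_(n, m) := map_mx (fun z => z^*) A^T.

Definition unitary n (U : 'M[C]_n) : Prop := U *m adj U = 1%:M.

Definition psd n (E : 'M[C]_n) : Prop :=
  adj E = E /\ forall v : 'cV[C]_n, 0 <= (adj v *m E *m v) 0 0.

Definition log2 (x : R) : R := ln x / ln 2.

Definition eta (x : R) : R := if x == 0 then 0 else - (x * log2 x).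

(* von Neumann entropy S(s) = -Tr(s log s), computed through a spectral
   decomposition s = U diag(d) U^dagger (U unitary, d real): S(s) = sum_i eta(d_i). *)
Definition vN_entropy n (s : 'M[C]_n) : R :=
  xget 0 [set S | exists (U : 'M[C]_n) (d : 'I_n -> R),
           [/\ unitary U, s = U *m diag_mx (\row_i (d i)%:C%C) *m adj U
             & S = \sum_i eta (d i)]].

(* A state on X (x) Y with dim X = m, dim Y = n, Kronecker ordering (X first),
   index (i,j) |-> i*n + j  (mxtens_index). *)
Definition ptraceY m n (rho : 'M[C]_(m * n)) : 'M[C]_m :=
  \matrix_(i, i') \sum_(j < n) rho (mxtens_index (i, j)) (mxtens_index (i', j)).

Definition ptraceX m n (rho : 'M[C]_(m * n)) : 'M[C]_n :=
  \matrix_(j, j') \sum_(i < m) rho (mxtens_index (i, j)) (mxtens_index (i, j')).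

Definition povm m k (E : 'I_k -> 'M[C]_m) : Prop :=
  (forall a, psd (E a)) /\ \sum_(a < k) E a = 1%:M.

Definition meas_prob m n k (E : 'I_k -> 'M[C]_m) (rho : 'M[C]_(m * n)) (a : 'I_k) : R :=
  complex.Re (\tr ((E a *t (1%:M : 'M[C]_n)) *m rho)).

Definition post_state m n k (E : 'I_k -> 'M[C]_m) (rho : 'M[C]_(m * n)) (a : 'I_k)
  : 'M[C]_n :=
  ((meas_prob E rho a)%:C%C)^-1 *: ptraceX ((E a *t (1%:M : 'M[C]_n)) *m rho).

(* quantum discord D(Y|X) with measurement on the first factor X *)
Definition discord m n (rho : 'M[C]_(m * n)) : R :=
  inf [set v | exists k (E : 'I_k -> 'M[C]_m), povm E /\
         v = \sum_(a < k) meas_prob E rho a * vN_entropy (post_state E rho a)]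
  + vN_entropy (ptraceY rho) - vN_entropy rho.

(* three qubits: |j> = |j1 j2 j3>, j = 4 j1 + 2 j2 + j3; qubit k in {0,1,2}
   (0 = first qubit) carries the bit of weight 2^(2-k) *)
Definition qbit (k : 'I_3) (j : 'I_8) : nat := (j %/ 2 ^ (2 - k)) %% 2.

(* reordering of the qubits: new position k holds original qubit s k *)
Definition reidx (s : 'I_3 -> 'I_3) (j : 'I_8) : 'I_8 :=
  inord (\sum_(k < 3) qbit k j * 2 ^ (2 - s k)).

Definition reorder (s : 'I_3 -> 'I_3) (rho : 'M[C]_8) : 'M[C]_8 :=
  \matrix_(i, j) rho (reidx s i) (reidx s j).

Definition psi2 : 'cV[C]_8 :=
  \col_j ((if val j == 7%N then 5 else 1) / (4 * (Num.sqrt (2 : R))%:C%C)).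

Definition rho2 : 'M[C]_8 := psi2 *m adj psi2.

End Quantum.

Definition qA : 'I_3 := @Ordinal 3 0 isT.
Definition qB : 'I_3 := @Ordinal 3 1 isT.
Definition qC : 'I_3 := @Ordinal 3 2 isT.

Definition qord (a b c : 'I_3) : 'I_3 -> 'I_3 :=
  fun k => if val k == 0%N then a else if val k == 1%N then b else c.

(* [rho2] is pure, and its amplitudes are all equal except the one of |111>, so it
   is invariant under every permutation of the qubits: the six discords are those of
   one pure state split as 1|2 or 2|1 qubits.  The discord of a pure state is the
   entropy of the reduced state of the measured side: the state itself has entropy 0,
   conditional entropies are nonnegative, and the measurement in the computational
   basis leaves pure conditional states.  With M the coefficient matrix of [psi2]
   the reduced state is M M^+, and the one-qubit matrix Q = [[1/8, 1/4], [1/4, 7/8]]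
   is M M^+ in the 2|4 split and M^+ M in the 4|2 split.  Q is annihilated by
   (x - a)(x - b) with a, b = (4 +- sqrt 13)/8, hence M M^+ by x (x - a)(x - b); the
   traces of s and s^2 then fix the nonzero spectrum to be {a, b}. *)

From HB Require Import structures.
From mathcomp Require Import all_boot all_order all_algebra.
From mathcomp Require Import boolp classical_sets reals exp.
From mathcomp Require Import complex mxtens spectral sesquilinear.
From mathcomp Require Import ring.
Set Implicit Arguments. Unset Strict Implicit. Unset Printing Implicit Defensive.
Import Order.TTheory GRing.Theory Num.Theory.
Local Open Scope ring_scope.

Section Eigenvectors.
Variables (K : comPzRingType) (n : nat) (v : 'cV[K]_n).

Lemma eigen_mul (A B : 'M_n) (x y : K) :
  A *m v = x *: v -> B *m v = y *: v -> A *m B *m v = (x * y) *: v.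
Proof. by move=> Av Bv; rewrite -mulmxA Bv -scalemxAr Av scalerA mulrC. Qed.

Lemma eigen_sub (A B : 'M_n) (x y : K) :
  A *m v = x *: v -> B *m v = y *: v -> (A - B) *m v = (x - y) *: v.
Proof. by move=> Av Bv; rewrite mulmxBl Av Bv scalerBl. Qed.

Lemma eigen_shift (A : 'M_n) (x c : K) :
  A *m v = x *: v -> (A - c%:M) *m v = (x - c) *: v.
Proof. by move=> Av; apply: eigen_sub; rewrite ?mul_scalar_mx. Qed.

End Eigenvectors.

Lemma mul_sub_scalar_mx (K : comPzRingType) n (A : 'M[K]_n) (x y : K) :
  (A - x%:M) *m (A - y%:M) = A *m A - (x + y) *: A + (x * y)%:M.
Proof.
rewrite mulmxBl !mulmxBr mul_mx_scalar !mul_scalar_mx scale_scalar_mx scalerDl.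
by rewrite opprB opprD !addrA addrAC [A *m A - y *: A - _]addrAC.
Qed.

Lemma quadratic_interpolation (F : fieldType) (a b ya yb : F) :
  a != 0 -> b != 0 -> a != b ->
  exists al be : F, al * a + be * a ^+ 2 = ya /\ al * b + be * b ^+ 2 = yb.
Proof.
move=> a0 b0 ab; have ab0 : a - b != 0 by rewrite subr_eq0.
exists (ya / a - (ya / a - yb / b) / (a - b) * a), ((ya / a - yb / b) / (a - b)).
by split; field; rewrite ab0 a0 b0.
Qed.

Lemma big_mxtens_index (V : nmodType) m n (F : 'I_(m * n) -> V) :
  \sum_k F k = \sum_i \sum_j F (mxtens_index (i, j)).
Proof.
rewrite pair_big (reindex (@mxtens_index m n)) /=; first by apply: eq_bigr => -[].
by exists (@mxtens_unindex m n) => x _; rewrite (mxtens_indexK, mxtens_unindexK).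
Qed.

Section Entropy.
Variable R : realType.
Local Notation C := R[i].
Local Open Scope sesquilinear_scope.

Lemma adjE m n (A : 'M[C]_(m, n)) : adj A = A ^t*.
Proof. by apply/matrixP => i j; rewrite !mxE. Qed.

Lemma adj_entry m n (A : 'M[C]_(m, n)) i j : adj A i j = (A j i)^*.
Proof. by rewrite !mxE. Qed.

Lemma adjM m n p (A : 'M[C]_(m, n)) (B : 'M[C]_(n, p)) :
  adj (A *m B) = adj B *m adj A.
Proof. by rewrite !adjE trmx_mul map_mxM. Qed.

Lemma adjK m n (A : 'M[C]_(m, n)) : adj (adj A) = A.
Proof. by rewrite !adjE trmxCK. Qed.

Lemma adj_delta m n (i : 'I_m) (j : 'I_n) :
  adj (delta_mx i j : 'M[C]_(m, n)) = delta_mx j i.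
Proof. by apply/matrixP => k l; rewrite !mxE conjC_nat andbC. Qed.

Lemma unitary_adj_mul n (U : 'M[C]_n) : unitary U -> adj U *m U = 1%:M.
Proof. exact: mulmx1C. Qed.

Lemma eigen_quad n (A : 'M[C]_n) (v : 'cV[C]_n) (x : C) :
  A *m v = x *: v -> adj v *m v = 1%:M -> (adj v *m A *m v) 0 0 = x.
Proof. by move=> Av v_norm; rewrite -mulmxA Av -scalemxAr v_norm !mxE eqxx mulr1. Qed.

Lemma eigen_annihilated n (A : 'M[C]_n) (v : 'cV[C]_n) (x : C) :
  A *m v = x *: v -> adj v *m v = 1%:M -> A = 0 -> x = 0.
Proof. by move=> Av v_norm A0; rewrite -(eigen_quad Av v_norm) A0 mulmx0 mul0mx mxE. Qed.

Lemma mxtrace_unitary n (U A : 'M[C]_n) : unitary U ->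
  \tr A = \sum_i (adj (col i U) *m A *m col i U) 0 0.
Proof.
move=> U_unitary; rewrite -{1}[A]mul1mx -U_unitary -mulmxA mxtrace_mulC.
rewrite /mxtrace; apply: eq_bigr => i _; rewrite !mxE.
apply: eq_bigr => k _; rewrite !mxE.
by congr (_ * _); apply: eq_bigr => l _; rewrite !mxE.
Qed.

Definition real_diag n (d : 'I_n -> R) : 'M[C]_n := diag_mx (\row_i (d i)%:C%C).

Lemma hermitian_decomposition n (s : 'M[C]_n) : adj s = s ->
  exists U (d : 'I_n -> R), unitary U /\ s = U *m real_diag d *m adj U.
Proof.
move=> s_herm; set P := spectralmx s; set sp := spectral_diag s.
have herm : s \is hermsymmx by rewrite is_hermitianmxE expr0 scale1r -adjE s_herm.
have /orthomx_spectralP s_sp := hermitian_normalmx herm.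
have P_unitary : P \is unitarymx := spectral_unitarymx s.
have /mxOverP sp_real := hermitian_spectral_diag_real herm.
exists (adj P), (fun i => complex.Re (sp 0 i)); split.
  by rewrite /unitary adjK; apply: mulmx1C; rewrite adjE; apply/unitarymxP.
have -> : real_diag (fun i => complex.Re (sp 0 i)) = diag_mx sp.
  by congr diag_mx; apply/rowP => i; rewrite mxE RRe_real ?sp_real.
by rewrite adjK adjE -(invmx_unitary P_unitary).
Qed.

Section Decomposition.
Variables (n : nat) (s U : 'M[C]_n) (d : 'I_n -> R).
Hypotheses (U_unitary : unitary U) (s_dec : s = U *m real_diag d *m adj U).

Lemma decomposition_eigen i : s *m col i U = (d i)%:C%C *: col i U.
Proof.
rewrite s_dec colE -!mulmxA (mulmxA (adj U)) unitary_adj_mul // mul1mx.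
rewrite mul_diag_mx scalemxAr; congr (_ *m _); apply/matrixP => j k.
by rewrite !mxE; case: eqP => [->|]; rewrite ?mulr1 ?mulr0.
Qed.

Lemma decomposition_col_norm i : adj (col i U) *m col i U = 1%:M.
Proof.
rewrite colE adjM adj_delta -mulmxA (mulmxA (adj U)) unitary_adj_mul //.
by rewrite mul1mx mul_delta_mx; apply/matrixP => j k; rewrite !ord1 !mxE.
Qed.

Lemma decomposition_mxtrace : \tr s = (\sum_i d i)%:C%C.
Proof.
rewrite (mxtrace_unitary _ U_unitary) rmorph_sum; apply: eq_bigr => i _.
exact: eigen_quad (decomposition_eigen i) (decomposition_col_norm i).
Qed.

Lemma decomposition_mxtrace_sqr : \tr (s *m s) = (\sum_i d i ^+ 2)%:C%C.
Proof.
rewrite (mxtrace_unitary _ U_unitary) rmorph_sum; apply: eq_bigr => i _.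
rewrite rmorphXn expr2; apply: eigen_quad (decomposition_col_norm i).
exact: eigen_mul (decomposition_eigen i) (decomposition_eigen i).
Qed.

End Decomposition.

Lemma vN_entropy_hermitian n (s : 'M[C]_n) : adj s = s ->
  exists U (d : 'I_n -> R), [/\ unitary U, s = U *m real_diag d *m adj U
                              & vN_entropy s = \sum_i eta (d i)].
Proof.
move=> /hermitian_decomposition [U [d [U_unitary s_dec]]].
rewrite /vN_entropy; set P := (X in xget 0 X); rewrite -/P.
have : P (xget 0 P) by apply: xgetPex; exists (\sum_i eta (d i)), U, d.
by rewrite {1}/P => -[U' [d' [? ? ?]]]; exists U', d'.
Qed.

Lemma eta0 : eta (0 : R) = 0.
Proof. by rewrite /eta eqxx. Qed.

Lemma eta1 : eta (1 : R) = 0.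
Proof. by rewrite /eta oner_eq0 /log2 ln1 mul0r mulr0 oppr0. Qed.

Lemma eta_ge0 (x : R) : 0 <= x -> x <= 1 -> 0 <= eta x.
Proof.
move=> x_ge0 x_le1; rewrite /eta; case: eqP => // _.
rewrite oppr_ge0 /log2 mulr_ge0_le0 // mulr_le0_ge0 ?ln_le0 //.
by rewrite invr_ge0 ln_ge0 // ler1n.
Qed.

Lemma vN_entropy_idem n (s : 'M[C]_n) : adj s = s -> s *m s = s -> vN_entropy s = 0.
Proof.
move=> /vN_entropy_hermitian [U [d [U_unitary s_dec ->]]] s_idem.
apply: big1 => i _; have e := decomposition_eigen U_unitary s_dec i.
have /complexI : (d i * d i - d i)%:C%C = 0%:C%C.
  rewrite rmorph0 rmorphB rmorphM.
  apply: (eigen_annihilated (eigen_sub (eigen_mul e e) e)).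
    exact: decomposition_col_norm.
  by rewrite s_idem subrr.
have -> : d i * d i - d i = d i * (d i - 1) by rewrite mulrBr mulr1.
by move/eqP; rewrite mulf_eq0 subr_eq0 => /orP[] /eqP ->; rewrite ?eta0 ?eta1.
Qed.

Lemma vN_entropy_ge0 n (s : 'M[C]_n) : psd s -> \tr s <= 1 -> 0 <= vN_entropy s.
Proof.
move=> [s_herm s_form] tr_le1.
have [U [d [U_unitary s_dec ->]]] := vN_entropy_hermitian s_herm.
have d_ge0 i : 0 <= d i.
  rewrite -ler0c -(eigen_quad (decomposition_eigen U_unitary s_dec i)) //.
  exact: decomposition_col_norm.
have sum_le1 : \sum_i d i <= 1.
  by rewrite -lecR rmorph1 -(decomposition_mxtrace U_unitary s_dec).
apply: sumr_ge0 => i _; apply: eta_ge0 => //; apply: le_trans sum_le1.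
by rewrite (bigD1 i) //= lerDl; apply: sumr_ge0.
Qed.

(* For nonzero distinct [a], [b] and hermitian [s] this says that the nonzero
   eigenvalues of [s] are exactly [a] and [b], each simple. *)
Definition two_level (a b : R) n (s : 'M[C]_n) : Prop :=
  [/\ s *m (s - a%:C%C%:M) *m (s - b%:C%C%:M) = 0,
      \tr s = (a + b)%:C%C & \tr (s *m s) = (a ^+ 2 + b ^+ 2)%:C%C].

Lemma vN_entropy_two_level (a b : R) n (s : 'M[C]_n) :
  a != 0 -> b != 0 -> a != b -> adj s = s -> two_level a b s ->
  vN_entropy s = eta a + eta b.
Proof.
move=> a0 b0 ab s_herm [s_ann tr_s tr_s2].
have [U [d [U_unitary s_dec ->]]] := vN_entropy_hermitian s_herm.
(* On the spectrum {0, a, b}, [eta] agrees with a quadratic through the origin,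
   so the entropy only depends on the two traces. *)
have [al [be [eta_a eta_b]]] := quadratic_interpolation (eta a) (eta b) a0 b0 ab.
have eta_d i : eta (d i) = al * d i + be * d i ^+ 2.
  have e := decomposition_eigen U_unitary s_dec i.
  have /complexI : (d i * (d i - a) * (d i - b))%:C%C = 0%:C%C.
    rewrite rmorph0 !rmorphM !rmorphB.
    have e_ann := eigen_mul (eigen_mul e (eigen_shift a%:C%C e)) (eigen_shift b%:C%C e).
    apply: (eigen_annihilated e_ann); last exact: s_ann.
    exact: decomposition_col_norm.
  move/eqP; rewrite !mulf_eq0 !subr_eq0 => /orP[/orP[]|] /eqP ->;
    rewrite ?eta_a ?eta_b //.
  by rewrite eta0 expr0n /= !mulr0 addr0.
have sum_d : \sum_i d i = a + b.
  by apply: complexI; rewrite -(decomposition_mxtrace U_unitary s_dec).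
have sum_d2 : \sum_i d i ^+ 2 = a ^+ 2 + b ^+ 2.
  by apply: complexI; rewrite -(decomposition_mxtrace_sqr U_unitary s_dec).
rewrite (eq_bigr _ (fun i _ => eta_d i)) big_split /= -!mulr_sumr sum_d sum_d2.
by rewrite -eta_a -eta_b; ring.
Qed.

Lemma two_level_mulmx_adj (a b : R) m n (M : 'M[C]_(m, n)) (B := adj M *m M) :
  (B - a%:C%C%:M) *m (B - b%:C%C%:M) = 0 ->
  \tr B = (a + b)%:C%C -> \tr (B *m B) = (a ^+ 2 + b ^+ 2)%:C%C ->
  two_level a b (M *m adj M).
Proof.
move=> B_ann tr_B tr_B2.
have shift c : adj M *m (M *m adj M - c%:M) = (B - c%:M) *m adj M.
  by rewrite mulmxBr mulmxBl mulmxA mul_mx_scalar mul_scalar_mx.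
split.
- have key : adj M *m ((M *m adj M - a%:C%C%:M) *m (M *m adj M - b%:C%C%:M))
             = (B - a%:C%C%:M) *m (B - b%:C%C%:M) *m adj M.
    by rewrite mulmxA shift -!mulmxA shift.
  by rewrite -!mulmxA key mulmxA B_ann mulmx0 mul0mx.
- by rewrite mxtrace_mulC.
- by rewrite -tr_B2 mulmxA mxtrace_mulC !mulmxA.
Qed.
End Entropy.

Section PositiveOperators.
Variable R : realType.
Local Notation C := R[i].

Lemma psd_mxtrace_ge0 n (K : 'M[C]_n) : psd K -> 0 <= \tr K.
Proof.
move=> [_ K_form]; apply: sumr_ge0 => j _; have := K_form (delta_mx j 0).
by rewrite adj_delta -rowE -colE !mxE.
Qed.

Lemma psd_gram m n (M : 'M[C]_(m, n)) : psd (adj M *m M).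
Proof.
split=> [|v]; first by rewrite adjM adjK.
rewrite mulmxA -mulmxA -adjM mxE; apply: sumr_ge0 => k _.
by rewrite !mxE mulrC mul_conjC_ge0.
Qed.

Lemma psd_conj m n (M : 'M[C]_(m, n)) (E : 'M[C]_m) : psd E -> psd (adj M *m E *m M).
Proof.
move=> [E_herm E_form]; split; first by rewrite !adjM adjK E_herm mulmxA.
by move=> v; have := E_form (M *m v); rewrite adjM !mulmxA.
Qed.

Lemma psd_trmx n (K : 'M[C]_n) : psd K -> psd K^T.
Proof.
move=> [K_herm K_form]; split.
  by rewrite -{2}K_herm !adjE; apply/matrixP => i j; rewrite !mxE.
move=> v; set w := map_mx Num.conj v.
have -> : (adj v *m K^T *m v) 0 0 = (adj w *m K *m w) 0 0.
  transitivity ((adj v *m K^T *m v)^T 0 0); first by rewrite [RHS]mxE.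
  rewrite !trmx_mul trmxK mulmxA.
  have -> : (adj v)^T = w by apply/matrixP => i j; rewrite !mxE.
  by have -> : v^T = adj w by apply/matrixP => i j; rewrite !mxE conjCK.
exact: K_form.
Qed.

Lemma psd_scale n (c : C) (K : 'M[C]_n) : 0 <= c -> psd K -> psd (c *: K).
Proof.
move=> c_ge0 [K_herm K_form]; split.
  apply/matrixP => i j; rewrite -{2}K_herm !mxE rmorphM /=.
  by rewrite conj_Creal ?ger0_real.
by move=> v; rewrite -scalemxAr -scalemxAl mxE mulr_ge0.
Qed.

End PositiveOperators.

Section PureStates.
Variable R : realType.
Local Notation C := R[i].

Lemma mxtrace_ptraceX m n (N : 'M[C]_(m * n)) : \tr (ptraceX N) = \tr N.
Proof.
rewrite /mxtrace big_mxtens_index exchange_big /=.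
by apply: eq_bigr => j _; rewrite mxE.
Qed.

Lemma rank_one_normalized_idem n (x : 'rV[C]_n) :
  let P := (\tr (adj x *m x))^-1 *: (adj x *m x)^T in P *m P = P.
Proof.
set K := adj x *m x; set t := \tr K.
have KK : K *m K = t *: K.
  have t_11 : (x *m adj x) 0 0 = t by rewrite /t mxtrace_mulC /mxtrace big_ord1.
  rewrite /K mulmxA -(mulmxA (adj x)) [x *m adj x]mx11_scalar t_11.
  by rewrite mul_mx_scalar -scalemxAl.
rewrite /= -scalemxAl -scalemxAr scalerA -trmx_mul KK linearZ /= scalerA.
have [->|t0] := eqVneq t 0; first by rewrite invr0 !mul0r.
by rewrite -mulrA mulVf // mulr1.
Qed.

Lemma povm_basis m : povm (fun a : 'I_m => delta_mx a a : 'M[C]_m).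
Proof.
split=> [a|].
  by rewrite -(mul_delta_mx (0 : 'I_1)) -adj_delta; apply: psd_gram.
apply/matrixP => i j; rewrite summxE (bigD1 i) //= big1 ?addr0.
  by rewrite !mxE eqxx /= eq_sym.
by move=> a /negPf ai; rewrite !mxE eq_sym ai.
Qed.

Definition coefmx m n (phi : 'cV[C]_(m * n)) : 'M[C]_(m, n) :=
  \matrix_(i, j) phi (mxtens_index (i, j)) 0.

Lemma pure_entry n (phi : 'cV[C]_n) a b : (phi *m adj phi) a b = phi a 0 * (phi b 0)^*.
Proof. by rewrite !mxE big_ord1 !mxE. Qed.

Lemma coefmxE m n (phi : 'cV[C]_(m * n)) i j :
  coefmx phi i j = phi (mxtens_index (i, j)) 0.
Proof. exact: mxE. Qed.

Section PureState.
Variables (m n : nat) (phi : 'cV[C]_(m * n)).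
Local Notation rho := (phi *m adj phi).
Local Notation M := (coefmx phi).

Lemma ptraceY_pure : ptraceY rho = M *m adj M.
Proof.
by apply/matrixP => i i'; rewrite !mxE; apply: eq_bigr => j _; rewrite pure_entry !mxE.
Qed.

Lemma ptraceX_pure (E : 'M[C]_m) :
  ptraceX ((E *t (1%:M : 'M[C]_n)) *m rho) = (adj M *m E *m M)^T.
Proof.
apply/matrixP => j j'; rewrite !mxE.
under eq_bigr => i _ do rewrite !mxE big_mxtens_index.
rewrite exchange_big /=; apply: eq_bigr => i' _.
rewrite !mxE mulr_suml; apply: eq_bigr => i _.
under eq_bigr => j'' _ do rewrite tensmxE pure_entry mxE.
rewrite (bigD1 j) //= big1 => [|k /negPf kj]; last by rewrite eq_sym kj mulr0 mul0r.
by rewrite eqxx mulr1 !mxE addr0; ring.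
Qed.

Section Measurement.
Variables (k : nat) (E : 'I_k -> 'M[C]_m) (a : 'I_k).
Hypothesis E_psd : psd (E a).

Lemma meas_prob_pure : (meas_prob E rho a)%:C%C = \tr (adj M *m E a *m M).
Proof.
rewrite /meas_prob -mxtrace_ptraceX ptraceX_pure mxtrace_tr.
by apply/RRe_real/ger0_real/psd_mxtrace_ge0/psd_conj.
Qed.

Lemma post_state_pure :
  post_state E rho a = (\tr (adj M *m E a *m M))^-1 *: (adj M *m E a *m M)^T.
Proof. by rewrite /post_state ptraceX_pure meas_prob_pure. Qed.

Lemma psd_post_state : psd (post_state E rho a).
Proof.
have K_psd := psd_conj M E_psd.
rewrite post_state_pure; apply: psd_scale (psd_trmx K_psd).
by rewrite invr_ge0 psd_mxtrace_ge0.
Qed.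

Lemma measurement_term_ge0 : 0 <= meas_prob E rho a * vN_entropy (post_state E rho a).
Proof.
have K_psd := psd_conj M E_psd.
apply: mulr_ge0; first by rewrite -ler0c meas_prob_pure psd_mxtrace_ge0.
apply: vN_entropy_ge0; first exact: psd_post_state.
rewrite post_state_pure mxtraceZ mxtrace_tr.
by have [->|t0] := eqVneq (\tr (adj M *m E a *m M)) 0; rewrite ?mulr0 ?mulVf.
Qed.

End Measurement.

Lemma post_state_basis_idem a :
  let P := post_state (fun a : 'I_m => delta_mx a a) rho a in P *m P = P.
Proof.
have E_psd : psd (delta_mx a a : 'M[C]_m).
  by rewrite -(mul_delta_mx (0 : 'I_1)) -adj_delta; apply: psd_gram.
rewrite /= post_state_pure // -(mul_delta_mx (0 : 'I_1)) -adj_delta mulmxA -adjM -mulmxA.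
exact: rank_one_normalized_idem.
Qed.

Lemma discord_pure : adj phi *m phi = 1%:M -> discord rho = vN_entropy (ptraceY rho).
Proof.
move=> phi_norm; rewrite /discord.
have -> : vN_entropy rho = 0.
  by apply: vN_entropy_idem; rewrite ?adjM ?adjK // mulmxA -(mulmxA phi) phi_norm mulmx1.
set S := (X in inf X).
(* The infimum is 0, attained by the measurement in the computational basis. *)
have S0 : S 0.
  exists m, (fun a => delta_mx a a); split; first exact: povm_basis.
  rewrite big1 // => a _; rewrite vN_entropy_idem ?mulr0 //.
  - exact: (psd_post_state ((povm_basis m).1 a)).1.
  - exact: post_state_basis_idem.
have S_ge0 : lbound S 0.
  by move=> _ [k [E [[E_psd _] ->]]]; apply: sumr_ge0 => a _; apply: measurement_term_ge0.
have -> : inf S = 0.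
  apply/eqP; rewrite eq_le ge_inf //=; last by exists 0.
  by apply: lb_le_inf => //; exists 0.
by rewrite add0r subr0.
Qed.

End PureState.
End PureStates.

Section Psi2.
Variable R : realType.
Local Notation C := R[i].

Definition amp (k : nat) : C := if k == 7%N then 5 else 1.

Lemma psi2_entry_ge0 k : 0 <= psi2 R k 0.
Proof.
by rewrite mxE divr_ge0 ?mulr_ge0 ?ler0c ?sqrtr_ge0 //; case: ifP.
Qed.

Lemma psi2_pair k l : psi2 R k 0 * (psi2 R l 0)^* = amp k * amp l / 32.
Proof.
rewrite conj_Creal ?ger0_real ?psi2_entry_ge0 // !mxE -/(amp k) -/(amp l).
set s := (Num.sqrt 2)%:C%C.
have s0 : s != 0 by rewrite gt_eqF // -(rmorph0 (real_complex R)) ltcR sqrtr_gt0 ltr0n.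
have s2 : s ^+ 2 = 2 by rewrite -rmorphXn sqr_sqrtr ?ler0n // rmorph_nat.
have -> : amp k / (4 * s) * (amp l / (4 * s)) = amp k * amp l / (16 * s ^+ 2).
  by field; rewrite s0.
by rewrite s2; field.
Qed.

Lemma psi2_normalized : adj (psi2 R) *m psi2 R = 1%:M.
Proof.
rewrite [LHS]mx11_scalar mxE.
under eq_bigr => k _ do rewrite adj_entry mulrC psi2_pair.
by rewrite !big_ord_recr big_ord0 /= /amp /=; congr _%:M; field.
Qed.

Lemma rho2E k l : rho2 R k l = amp k * amp l / 32.
Proof. by rewrite /rho2 pure_entry psi2_pair. Qed.

(* [[1/8, 1/4], [1/4, 7/8]], the reduced state of each qubit of [rho2]. *)
Definition rho2_qubit : 'M[C]_2 := \matrix_(i, j) ((3 + 5 ^+ (i + j)) / 32).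

Lemma coefmx_psi2_mul_adj :
  coefmx (psi2 R : 'cV_(2 * 4)) *m adj (coefmx (psi2 R : 'cV_(2 * 4))) = rho2_qubit.
Proof.
apply/matrixP => i j; rewrite !mxE.
under eq_bigr => k _ do rewrite adj_entry !coefmxE psi2_pair.
rewrite !big_ord_recr big_ord0 /=.
by case: i => [[|[|//]] ?]; case: j => [[|[|//]] ?]; rewrite /amp /=; field.
Qed.

Lemma adj_coefmx_psi2_mul :
  adj (coefmx (psi2 R : 'cV_(4 * 2))) *m coefmx (psi2 R : 'cV_(4 * 2)) = rho2_qubit.
Proof.
apply/matrixP => i j; rewrite !mxE.
under eq_bigr => k _ do rewrite adj_entry !coefmxE mulrC psi2_pair.
rewrite !big_ord_recr big_ord0 /=.
by case: i => [[|[|//]] ?]; case: j => [[|[|//]] ?]; rewrite /amp /=; field.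
Qed.

End Psi2.

Lemma reidx_eq7 (a b c : 'I_3) (j : 'I_8) : uniq [:: a; b; c] ->
  (reidx (qord a b c) j == 7 :> nat) = (j == 7 :> nat).
Proof.
move: a b c => [[|[|[|//]]] ?] [[|[|[|//]]] ?] [[|[|[|//]]] ?] //= _;
  case: j => [[|[|[|[|[|[|[|[|//]]]]]]]] ?];
  by rewrite /reidx !big_ord_recr big_ord0 inordK.
Qed.

Lemma reorder_rho2 (R : realType) (a b c : 'I_3) : uniq [:: a; b; c] ->
  reorder (qord a b c) (rho2 R) = rho2 R.
Proof.
by move=> abc; apply/matrixP => i j; rewrite mxE !rho2E /amp !reidx_eq7.
Qed.

Section QubitSpectrum.
Variable R : realType.
Local Notation Q := (rho2_qubit R).

Definition lambda_p : R := (4 + Num.sqrt 13) / 8.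
Definition lambda_m : R := (4 - Num.sqrt 13) / 8.

Lemma sqr_sqrt13 : Num.sqrt (13 : R) ^+ 2 = 13.
Proof. by rewrite sqr_sqrtr ?ler0n. Qed.

Lemma sqrt13_lt4 : Num.sqrt (13 : R) < 4.
Proof.
rewrite -(ltr_pXn2r (_ : 0 < 2)%N) ?nnegrE ?sqrtr_ge0 ?ler0n // sqr_sqrt13.
by rewrite -natrX ltr_nat.
Qed.

Lemma lambda_p_neq0 : lambda_p != 0.
Proof. by rewrite gt_eqF // divr_gt0 ?ltr0n // ltr_pwDl ?sqrtr_ge0. Qed.

Lemma lambda_m_neq0 : lambda_m != 0.
Proof. by rewrite gt_eqF // divr_gt0 ?ltr0n // subr_gt0 sqrt13_lt4. Qed.

Lemma lambda_neq : lambda_p != lambda_m.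
Proof.
rewrite -subr_eq0.
have -> : lambda_p - lambda_m = Num.sqrt 13 / 4 by rewrite /lambda_p /lambda_m; field.
by rewrite mulf_neq0 ?invr_eq0 ?pnatr_eq0 // gt_eqF // sqrtr_gt0 ltr0n.
Qed.

Lemma lambda_add : lambda_p + lambda_m = 1.
Proof. by rewrite /lambda_p /lambda_m; field. Qed.

Lemma lambda_mul : lambda_p * lambda_m = 3 / 64.
Proof.
have -> : lambda_p * lambda_m = (16 - Num.sqrt 13 ^+ 2) / 64.
  by rewrite /lambda_p /lambda_m; field.
by rewrite sqr_sqrt13; field.
Qed.

Lemma lambda_sqr_add : lambda_p ^+ 2 + lambda_m ^+ 2 = 29 / 32.
Proof.
have -> : lambda_p ^+ 2 + lambda_m ^+ 2
          = (lambda_p + lambda_m) ^+ 2 - 2 * (lambda_p * lambda_m) by ring.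
by rewrite lambda_add lambda_mul; field.
Qed.

Lemma rho2_qubit_sqr : Q *m Q = Q - (3 / 64)%:M.
Proof.
apply/matrixP => i j; rewrite !mxE !big_ord_recr big_ord0 /= !mxE.
by case: i => [[|[|//]] ?]; case: j => [[|[|//]] ?] /=; field.
Qed.

Lemma rho2_qubit_annihilator :
  (Q - (lambda_p%:C)%C%:M) *m (Q - (lambda_m%:C)%C%:M) = 0.
Proof.
rewrite mul_sub_scalar_mx -rmorphD -rmorphM lambda_add lambda_mul fmorph_div.
by rewrite !rmorph_nat scale1r rho2_qubit_sqr addrAC subrK subrr.
Qed.

Lemma rho2_qubit_two_level : two_level lambda_p lambda_m Q.
Proof.
split.
- by rewrite -mulmxA rho2_qubit_annihilator mulmx0.
- by rewrite lambda_add rmorph1 /mxtrace !big_ord_recr big_ord0 /= !mxE /=; field.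
- rewrite lambda_sqr_add fmorph_div !rmorph_nat rho2_qubit_sqr.
  by rewrite /mxtrace !big_ord_recr big_ord0 /= !mxE /=; field.
Qed.

End QubitSpectrum.

Theorem lemma2 (R : realType) :
  let c : R :=
    - ((4 + Num.sqrt 13) / 8) * log2 ((4 + Num.sqrt 13) / 8)
    - ((4 - Num.sqrt 13) / 8) * log2 ((4 - Num.sqrt 13) / 8) in
  (* D(B2C2|A2) *) discord (reorder (qord qA qB qC) (rho2 R) : 'M_(2 * 4)) = c /\
      (* D(A2C2|B2) *) discord (reorder (qord qB qA qC) (rho2 R) : 'M_(2 * 4)) = c /\
      (* D(A2B2|C2) *) discord (reorder (qord qC qA qB) (rho2 R) : 'M_(2 * 4)) = c /\
      (* D(C2|A2B2) *) discord (reorder (qord qA qB qC) (rho2 R) : 'M_(4 * 2)) = c /\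
      (* D(B2|A2C2) *) discord (reorder (qord qA qC qB) (rho2 R) : 'M_(4 * 2)) = c /\
    (* D(A2|B2C2) *) discord (reorder (qord qB qC qA) (rho2 R) : 'M_(4 * 2)) = c.
Proof.
move=> c.
have entropy_c n (s : 'M[R[i]]_n) : adj s = s -> two_level (lambda_p R) (lambda_m R) s ->
    vN_entropy s = c.
  move=> s_herm s_two.
  rewrite (vN_entropy_two_level (lambda_p_neq0 R) (lambda_m_neq0 R) (lambda_neq R)) //.
  by rewrite /eta (negPf (lambda_p_neq0 R)) (negPf (lambda_m_neq0 R)) /c mulNr.
have D24 : discord (rho2 R : 'M_(2 * 4)) = c.
  rewrite /rho2 (@discord_pure _ 2 4) ?psi2_normalized // ptraceY_pure.
  apply: entropy_c; first by rewrite adjM adjK.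
  by rewrite coefmx_psi2_mul_adj; apply: rho2_qubit_two_level.
have D42 : discord (rho2 R : 'M_(4 * 2)) = c.
  rewrite /rho2 (@discord_pure _ 4 2) ?psi2_normalized // ptraceY_pure.
  apply: entropy_c; first by rewrite adjM adjK.
  have [_ tr_Q tr_Q2] := rho2_qubit_two_level R.
  by apply: two_level_mulmx_adj; rewrite adj_coefmx_psi2_mul // rho2_qubit_annihilator.
by rewrite !reorder_rho2.
Qed.
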